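(* With notation as in the context, for each $s\in\mathbb{S}_{p^n}$, $$w(s)=\min\{D(s,t):t\in\mathbb{S}_{p^n}(h),\ \mathfrak{a}(t)\succeq s\}.$$
   Context: Let $p$ be a prime, $n\ge1$, $\mathbb{S}_{p^n}=\{0,\dots,p^n-1\}$; write $s\in\mathbb{S}_{p^n}$ as $s=\sum_{i=1}^n s_{(n-i)}p^{n-i}$ with digits in $\{0,\dots,p-1\}$, and $s\preceq t$ means $s_{(n-i)}\le t_{(n-i)}$ for all $i$. Let $b_1,\dots,b_n$ be integers prime to $p$, $\mathfrak{b}(s)=\sum_i s_{(n-i)}p^{n-i}b_i$, and for $t\in\mathbb{Z}$ let $\mathfrak{a}(t)\in\mathbb{S}_{p^n}$ be the unique element with $\mathfrak{b}(\mathfrak{a}(t))\equiv-t\pmod{p^n}$. Fix $h\in\mathbb{Z}$, let $\mathbb{S}_{p^n}(h)=\{t\in\mathbb{Z}:h\le t<h+p^n\}$, and let $b\in\mathbb{S}_{p^n}(h)$ be the unique element with $\mathfrak{a}(b)=p^n-1$. For $s\in\mathbb{S}_{p^n}$, $t\in\mathbb{S}_{p^n}(h)$ define $D(s,t)=\lfloor(\mathfrak{b}(s)+t-h)/p^n\rfloor$, $d(s)=D(s,b)$, and $w(s)=\min\{d(u)-d(u-s):u\in\mathbb{S}_{p^n},\,u\succeq s\}$. *)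

From mathcomp Require Import all_boot all_order all_algebra.
Set Implicit Arguments. Unset Strict Implicit. Unset Printing Implicit Defensive.
Import Order.TTheory GRing.Theory Num.Theory.
Local Open Scope ring_scope.

Definition digit (p j s : nat) : nat := (s %/ p ^ j %% p)%N.

Definition dominated (p n s u : nat) : bool :=
  [forall j : 'I_n, (digit p j s <= digit p j u)%N].

Definition bfrak (p n : nat) (b : nat -> int) (s : nat) : int :=
  \sum_(1 <= i < n.+1) ((digit p (n - i) s * p ^ (n - i))%N)%:Z * b i.

Definition afrak (p n : nat) (b : nat -> int) (t : int) : nat :=
  odflt 0%N (omap val
    [pick s : 'I_(p ^ n) | ((bfrak p n b s + t) %% (p ^ n)%:Z)%Z == 0]).

Definition bstar (p n : nat) (b : nat -> int) (h : int) : int :=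
  h + (odflt 0%N (omap val
    [pick k : 'I_(p ^ n) | afrak p n b (h + k%:Z) == (p ^ n).-1]))%:Z.

Definition Dfl (p n : nat) (b : nat -> int) (h : int) (s : nat) (t : int) : int :=
  ((bfrak p n b s + t - h) %/ (p ^ n)%:Z)%Z.

Definition dfl (p n : nat) (b : nat -> int) (h : int) (s : nat) : int :=
  Dfl p n b h s (bstar p n b h).

Definition seqmin (l : seq int) : int := foldr Order.min (head 0 l) l.

Definition Sp (p n : nat) : seq nat := iota 0 (p ^ n).
Definition Sph (p n : nat) (h : int) : seq int := [seq h + k%:Z | k <- iota 0 (p ^ n)].

Definition wfun (p n : nat) (b : nat -> int) (h : int) (s : nat) : int :=
  seqmin [seq dfl p n b h u - dfl p n b h (u - s)%N | u <- Sp p n & dominated p n s u].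

From mathcomp Require Import all_boot all_order all_algebra.
From mathcomp Require Import zify ring.
Import Order.TTheory GRing.Theory Num.Theory.

(* Put v := u - s. Sending u to the point t of the window S_{p^n}(h) with
   a-frak(t) = (p^n - 1) - v (the digitwise complement of v) is a bijection from
   {u : s ⪯ u} onto {t : s ⪯ a-frak(t)}, with inverse t |-> ((p^n - 1) - a-frak(t)) + s;
   both sums are carry-free.  Since b-frak is additive on carry-free sums and, the
   b_i being units mod p, a bijection modulo p^n, the difference d(u) - d(v) of two
   floors equals D(s, t).  Both minima therefore range over the same values. *)

Section BaseDigits.

Variable p : nat.
Hypothesis p_gt0 : 0 < p.

Lemma digit_lt j x : digit p j x < p.
Proof. by rewrite /digit ltn_pmod. Qed.

Lemma digitS j x : digit p j.+1 x = digit p j (x %/ p).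
Proof. by rewrite /digit expnS divnMA. Qed.

Lemma digit_expand {n x} : x < p ^ n -> x = \sum_(j < n) digit p j x * p ^ j.
Proof.
elim: n x => [|n IH] x hx; first by rewrite big_ord0; move: hx; rewrite expn0; case: x.
rewrite big_ord_recl /= expn0 muln1.
under eq_bigr => i _ do rewrite /bump /= add1n digitS expnS mulnCA.
rewrite -big_distrr /= -IH; last by rewrite ltn_divLR // mulnC -expnS.
by rewrite /digit expn0 divn1 {1}(divn_eq x p) addnC mulnC.
Qed.

Lemma sum_geom_pred n : \sum_(j < n) (p - 1) * p ^ j = (p ^ n).-1.
Proof.
elim: n => [|n IH]; first by rewrite big_ord0 expn0.
rewrite big_ord_recr /= IH expnS.
have : 0 < p ^ n by rewrite expn_gt0 p_gt0.
set m := p ^ n => hm; nia.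
Qed.

Lemma sum_digits_lt n (d : nat -> nat) : (forall j, j < n -> d j < p) ->
  \sum_(i < n) d i * p ^ i < p ^ n.
Proof.
move=> d_lt; have pn_gt0 : 0 < p ^ n by rewrite expn_gt0 p_gt0.
rewrite -(prednK pn_gt0) ltnS -sum_geom_pred.
by apply: leq_sum => i _; rewrite leq_mul2r; have := d_lt i (ltn_ord i); lia.
Qed.

Lemma digit_sum n (d : nat -> nat) j : (forall j, j < n -> d j < p) -> j < n ->
  digit p j (\sum_(i < n) d i * p ^ i) = d j.
Proof.
elim: n d j => [|n IH] d j d_lt // hj.
have shiftE : \sum_(i < n.+1) d i * p ^ i = d 0 + (\sum_(i < n) d i.+1 * p ^ i) * p.
  rewrite big_ord_recl /= expn0 muln1 big_distrl /=; congr (_ + _).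
  by apply: eq_bigr => i _; rewrite /bump /= add1n expnS mulnCA mulnC.
rewrite shiftE; case: j hj => [|j] hj.
  by rewrite /digit expn0 divn1 addnC modnMDl modn_small ?d_lt.
rewrite digitS addnC divnMDl // divn_small ?d_lt // addn0.
by apply: (IH (fun i => d i.+1)) => // i hi; apply: d_lt.
Qed.

Lemma digit_pred_exp n j : j < n -> digit p j (p ^ n).-1 = p - 1.
Proof.
by move=> hj; rewrite -sum_geom_pred (@digit_sum n (fun=> p - 1)) // => i _; lia.
Qed.

Lemma digits_addnE {n x y} : x < p ^ n -> y < p ^ n ->
  x + y = \sum_(j < n) (digit p j x + digit p j y) * p ^ j.
Proof.
move=> hx hy; rewrite {1}(digit_expand hx) {1}(digit_expand hy) -big_split /=.
by apply: eq_bigr => i _; rewrite mulnDl.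
Qed.

Lemma addn_digits_lt n x y : x < p ^ n -> y < p ^ n ->
  (forall j, j < n -> digit p j x + digit p j y < p) -> x + y < p ^ n.
Proof.
by move=> hx hy no_carry; rewrite (digits_addnE hx hy);
  apply: (@sum_digits_lt n (fun i => digit p i x + digit p i y)).
Qed.

Lemma digit_addn n x y : x < p ^ n -> y < p ^ n ->
  (forall j, j < n -> digit p j x + digit p j y < p) ->
  forall j, j < n -> digit p j (x + y) = digit p j x + digit p j y.
Proof.
move=> hx hy no_carry j hj.
by rewrite (digits_addnE hx hy) (@digit_sum n (fun i => digit p i x + digit p i y)).
Qed.

Lemma digit_subn n u s : u < p ^ n -> s < p ^ n -> dominated p n s u ->
  forall j, j < n -> digit p j (u - s) = digit p j u - digit p j s.
Proof.
move=> hu hs /forallP dom_su.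
have le_su j : j < n -> digit p j s <= digit p j u by move=> hj; apply: (dom_su (Ordinal hj)).
have subE : u - s = \sum_(j < n) (digit p j u - digit p j s) * p ^ j.
  apply/eqP; rewrite -(eqn_add2r s) subnK.
    rewrite {1}(digit_expand hu) {2}(digit_expand hs) -big_split /=.
    by apply/eqP/eq_bigr => i _; rewrite -mulnDl subnK ?le_su.
  rewrite (digit_expand hu) (digit_expand hs).
  by apply: leq_sum => i _; rewrite leq_mul2r le_su ?orbT.
move=> j hj; rewrite subE (@digit_sum n (fun i => digit p i u - digit p i s)) // => i _.
exact: leq_ltn_trans (leq_subr _ _) (digit_lt _ _).
Qed.

Lemma dominated_pred_exp n x : dominated p n x (p ^ n).-1.
Proof.
apply/forallP => j; rewrite digit_pred_exp //; have := digit_lt j x; lia.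
Qed.

End BaseDigits.

Arguments digit_lt {p} p_gt0 j x.
Arguments digit_expand {p} p_gt0 {n x}.
Arguments digit_subn {p} p_gt0 {n u s}.
Arguments digit_addn {p} p_gt0 {n x y}.
Arguments addn_digits_lt {p} p_gt0 {n x y}.
Arguments dominated_pred_exp {p} p_gt0 n x.

Lemma dominatedP p n s u :
  reflect (forall j, j < n -> digit p j s <= digit p j u) (dominated p n s u).
Proof.
apply: (iffP forallP) => [dom j hj | dom [j hj]]; [exact: (dom (Ordinal hj)) | exact: dom].
Qed.

Local Open Scope ring_scope.

Lemma bfrak_add p n b x y z :
  (forall j, (j < n)%N -> digit p j x = (digit p j y + digit p j z)%N) ->
  bfrak p n b x = bfrak p n b y + bfrak p n b z.
Proof.
move=> dE; rewrite /bfrak -big_split /=; apply: eq_big_nat => i /andP [i_ge1 i_le].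
by rewrite dE; [rewrite mulnDl PoszD mulrDl | lia].
Qed.

Lemma bfrak_rev p n b x :
  bfrak p n b x = \sum_(j < n) (digit p j x * p ^ j)%N%:Z * b (n - j)%N.
Proof.
rewrite /bfrak big_add1 /= big_nat_rev /= big_mkord; apply: eq_bigr => [[i hi]] _ /=.
have e1 : (0 + n - i.+1).+1 = (n - i)%N by lia.
have e2 : (n - (n - i) = i)%N by lia.
by rewrite e1 e2.
Qed.

Lemma dvdz_sub_small_eq p (a c : nat) : (a < p)%N -> (c < p)%N ->
  (p%:Z %| a%:Z - c%:Z)%Z -> a = c.
Proof.
wlog le_ca : a c / (c <= a)%N => [hwlog ha hc hd|ha hc].
  case: (leqP c a) => [|/ltnW] le; first exact: hwlog.
  by apply/esym/hwlog => //; rewrite -opprB dvdzE abszN -dvdzE.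
rewrite dvdzE subzn // absz_nat; case: (posnP (a - c)) => [|a_gt_c /(dvdn_leq a_gt_c)]; lia.
Qed.

Lemma weighted_digits_inj p n (c : nat -> int) (d e : nat -> nat) : prime p ->
  (forall j, (j < n)%N -> coprimez (c j) p) ->
  (forall j, (j < n)%N -> d j < p /\ e j < p)%N ->
  ((p ^ n)%:Z %| \sum_(j < n) ((d j)%:Z - (e j)%:Z) * (p ^ j)%:Z * c j)%Z ->
  forall j, (j < n)%N -> d j = e j.
Proof.
(* Modulo p only the j = 0 term survives and c 0 is a unit; then cancel one factor p. *)
move=> p_prime; elim: n c d e => [|n IH] c d e c_cop de_lt dvd_sum j hj //.
rewrite big_ord_recl /= expn0 mulr1 in dvd_sum.
set S := \sum_(i < n) ((d i.+1)%:Z - (e i.+1)%:Z) * (p ^ i)%:Z * c i.+1.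
have sumE : \sum_(i < n) ((d (bump 0 i))%:Z - (e (bump 0 i))%:Z) * (p ^ bump 0 i)%:Z
    * c (bump 0 i) = p%:Z * S.
  by rewrite /S big_distrr; apply: eq_bigr => i _; rewrite /bump /= add1n expnS PoszM; ring.
rewrite sumE expnS PoszM in dvd_sum.
have de0 : d 0%N = e 0%N.
  have [d0_lt e0_lt] := de_lt 0%N isT.
  apply: dvdz_sub_small_eq d0_lt e0_lt _.
  rewrite -(@Gauss_dvdzl _ _ (c 0%N)); last by rewrite coprimez_sym c_cop.
  rewrite -(addrK (p%:Z * S) (_ * c 0%N)).
  by apply: rpredB; [apply: dvdz_trans dvd_sum; apply: dvdz_mulr | apply: dvdz_mulr].
case: j hj => [|j] hj; first exact: de0.
apply: (IH (fun i => c i.+1) (fun i => d i.+1) (fun i => e i.+1)) => //.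
- by move=> i hi; apply: c_cop.
- by move=> i hi; apply: de_lt.
rewrite de0 subrr mul0r add0r in dvd_sum.
by rewrite -(@dvdz_mul2l p%:Z) // -lt0n prime_gt0.
Qed.

Lemma abs_modzE (z : int) {N : nat} : (0 < N)%N -> (`|(z %% N%:Z)%Z|%N)%:Z = (z %% N%:Z)%Z.
Proof. by move=> N_gt0; rewrite gez0_abs // modz_ge0 // -lt0n. Qed.

Lemma abs_modz_lt (z : int) {N : nat} : (0 < N)%N -> (`|(z %% N%:Z)%Z| < N)%N.
Proof. by move=> N_gt0; rewrite -ltz_nat abs_modzE // ltz_pmod // ltz_nat. Qed.

Section FrakMaps.

Variables (p n : nat) (b : nat -> int).
Hypothesis p_prime : prime p.
Hypothesis b_coprime : forall i : nat, (1 <= i <= n)%N -> coprimez (b i) p%:Z.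

Local Notation N := (p ^ n)%N.

Let N_gt0 : (0 < N)%N. Proof. by rewrite expn_gt0 prime_gt0. Qed.

Lemma bfrak_inj x y : (x < N)%N -> (y < N)%N ->
  (N%:Z %| bfrak p n b x - bfrak p n b y)%Z -> x = y.
Proof.
move=> hx hy dvd_xy; have p_gt0 := prime_gt0 p_prime.
have digit_xy : forall j, (j < n)%N -> digit p j x = digit p j y.
  apply: (@weighted_digits_inj p n (fun j => b (n - j)%N)) => //.
  - by move=> j hj; apply: b_coprime; lia.
  - by move=> j _; rewrite !digit_lt.
  move: dvd_xy; rewrite !bfrak_rev -sumrB.
  by congr (_ %| _)%Z; apply: eq_bigr => i _; rewrite !PoszM; ring.
rewrite (digit_expand p_gt0 hx) (digit_expand p_gt0 hy).
by apply: eq_bigr => [[i hi]] _; rewrite digit_xy.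
Qed.

Lemma bfrak_surj r : exists2 x, (x < N)%N & (N%:Z %| bfrak p n b x - r)%Z.
Proof.
pose res (z : int) : 'I_N := Ordinal (abs_modz_lt z N_gt0).
have res_eq z z' : res z = res z' -> (N%:Z %| z - z')%Z.
  by move/(congr1 (Posz \o val)) => /=; rewrite !abs_modzE // -eqz_mod_dvd => ->.
pose f (x : 'I_N) := res (bfrak p n b x).
have f_inj : injective f.
  by move=> x y /res_eq /bfrak_inj xy; apply/val_inj/xy.
have /codomP [x fx] := injF_onto f_inj (res r).
by exists x => //; apply: res_eq.
Qed.

Lemma afrak_spec t :
  (afrak p n b t < N)%N /\ (N%:Z %| bfrak p n b (afrak p n b t) + t)%Z.
Proof.
rewrite /afrak; case: pickP => [s /eqP /dvdz_mod0P hs | none] //=.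
have [x hx dvd_x] := bfrak_surj (- t).
by have := none (Ordinal hx); rewrite /= -[t]opprK; move/dvdz_mod0P: dvd_x => ->.
Qed.

Lemma afrak_uniq t x : (x < N)%N -> (N%:Z %| bfrak p n b x + t)%Z -> afrak p n b t = x.
Proof.
move=> hx dvd_x; have [ha dvd_a] := afrak_spec t.
apply: bfrak_inj => //.
by rewrite -(addrKA t) [t + _]addrC; apply: rpredB.
Qed.

Lemma afrak_window_onto h x : (x < N)%N -> exists2 k, (k < N)%N & afrak p n b (h + k%:Z) = x.
Proof.
move=> hx; set z := - bfrak p n b x - h.
exists `|(z %% N%:Z)%Z|%N; first exact: abs_modz_lt.
apply: afrak_uniq => //; rewrite abs_modzE //.
have -> : bfrak p n b x + (h + (z %% N%:Z)%Z) = (z %% N%:Z)%Z - z by rewrite /z; ring.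
by rewrite -eqz_mod_dvd modz_mod.
Qed.

Lemma bstar_spec h : (N%:Z %| bfrak p n b N.-1 + bstar p n b h)%Z.
Proof.
rewrite /bstar; case: pickP => [k /eqP ak | none] /=.
  by have [_] := afrak_spec (h + (val k)%:Z); rewrite ak.
have [|k hk ak] := afrak_window_onto h N.-1; first by rewrite ltn_predL.
by have := none (Ordinal hk); rewrite /= ak eqxx.
Qed.

End FrakMaps.

Arguments afrak_spec {p n b} p_prime b_coprime t.
Arguments afrak_window_onto {p n b} p_prime b_coprime h x.

Lemma foldr_min_le (x0 : int) l x : x \in x0 :: l -> foldr Order.min x0 l <= x.
Proof.
elim: l => [|a l IH] /=; first by rewrite inE => /eqP ->.
rewrite !inE ge_min => /or3P [x_x0 | /eqP <- | x_l]; last 2 first.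
- by rewrite lexx.
- by rewrite IH ?orbT // inE x_l orbT.
by rewrite IH ?orbT // inE x_x0.
Qed.

Lemma foldr_min_mem (x0 : int) l : foldr Order.min x0 l \in x0 :: l.
Proof.
elim: l => [|a l IH] /=; first by rewrite inE.
rewrite minEle; case: ifP => _; first by rewrite !inE eqxx orbT.
by move: IH; rewrite !inE => /orP [-> | ->]; rewrite ?orbT.
Qed.

Lemma seqmin_le (l : seq int) (x : int) : x \in l -> seqmin l <= x.
Proof. by case: l => // a l x_l; apply: foldr_min_le; rewrite inE x_l orbT. Qed.

Lemma seqmin_mem {l : seq int} {x : int} : x \in l -> seqmin l \in l.
Proof.
case: l => // a l _; change (foldr Order.min a (a :: l) \in a :: l).
have := foldr_min_mem a (a :: l).
by rewrite inE => /orP [/eqP -> | //]; rewrite inE eqxx.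
Qed.

Lemma seqmin_eq (l1 l2 : seq int) (x : int) : x \in l1 ->
  {subset l1 <= l2} -> {subset l2 <= l1} -> seqmin l1 = seqmin l2.
Proof.
move=> x_l1 sub12 sub21; have min1 := seqmin_mem x_l1.
have min2 := seqmin_mem (sub12 _ min1).
by apply/le_anti/andP; split; apply: seqmin_le; [apply: sub21 | apply: sub12].
Qed.

Section Correspondence.

Variables (p n : nat) (b : nat -> int) (h : int).
Hypothesis p_prime : prime p.
Hypothesis b_coprime : forall i : nat, (1 <= i <= n)%N -> coprimez (b i) p%:Z.

Local Notation N := (p ^ n)%N.
Local Notation bf := (bfrak p n b).
Local Notation d := (dfl p n b h).

Let p_gt0 : (0 < p)%N. Proof. exact: prime_gt0. Qed.
Let N_gt0 : (0 < N)%N. Proof. by rewrite expn_gt0 p_gt0. Qed.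
Let top_lt : (N.-1 < N)%N. Proof. by rewrite ltn_predL. Qed.

Lemma bfrak_complement {v} : (v < N)%N -> bf N.-1 = bf (N.-1 - v) + bf v.
Proof.
move=> hv; apply: bfrak_add => j hj.
have top_dom := dominated_pred_exp p_gt0 n v.
rewrite (digit_subn p_gt0 top_lt hv top_dom) // subnK //.
by move/dominatedP: top_dom; apply.
Qed.

Lemma dominated_complement s u : (u < N)%N -> (s < N)%N -> dominated p n s u ->
  dominated p n s (N.-1 - (u - s)).
Proof.
move=> hu hs dom_su; have hv : (u - s < N)%N := leq_ltn_trans (leq_subr _ _) hu.
apply/dominatedP => j hj; move/dominatedP: (dom_su) => /(_ j hj) le_su.
rewrite (digit_subn p_gt0 top_lt hv (dominated_pred_exp p_gt0 n _)) //.
rewrite (digit_subn p_gt0 hu hs dom_su) // digit_pred_exp //.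
by have := digit_lt p_gt0 j u; lia.
Qed.

(* a-frak(t) + (u - s) = p^n - 1 without carries, so b-frak(u - s) + b^* = t (mod p^n):
   the two floors in d(u) and d(u - s) then differ by exactly D(s, t). *)
Lemma dfl_sub_Dfl {u s t} : (u < N)%N -> (s < N)%N -> dominated p n s u ->
  0 <= t - h < N%:Z -> afrak p n b t = (N.-1 - (u - s))%N ->
  d u - d (u - s)%N = Dfl p n b h s t.
Proof.
move=> hu hs dom_su t_win a_t; set v := (u - s)%N in a_t *.
have hv : (v < N)%N := leq_ltn_trans (leq_subr _ _) hu.
have bf_u : bf u = bf v + bf s.
  apply: bfrak_add => j hj; rewrite (digit_subn p_gt0 hu hs dom_su) // subnK //.
  by move/dominatedP: dom_su; apply.
have [_] := afrak_spec p_prime b_coprime t; rewrite a_t => dvd_a.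
have [q qE] : exists q, bf v + bstar p n b h - h = q * N%:Z + (t - h).
  have : (N%:Z %| (bf v + bstar p n b h - h) - (t - h))%Z.
    have -> : bf v + bstar p n b h - h - (t - h) =
      (bf N.-1 + bstar p n b h) - (bf (N.-1 - v) + t) by rewrite (bfrak_complement hv); ring.
    by apply: rpredB; [apply: bstar_spec | apply: dvd_a].
  by case/dvdzP => q qE; exists q; rewrite -qE; ring.
have N_neq0 : N%:Z != 0 by rewrite -lt0n.
rewrite /dfl /Dfl bf_u (_ : _ + _ + _ - _ = bf v + bstar p n b h - h + bf s); last by ring.
rewrite qE -addrA !divzMDl // (@divz_small _ N%:Z t_win) addr0.
by rewrite addrAC subrr add0r; congr (_ %/ _)%Z; ring.
Qed.

Lemma wfun_term_mem s u : (s < N)%N -> u \in Sp p n -> dominated p n s u ->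
  d u - d (u - s)%N \in
    [seq Dfl p n b h s t | t <- Sph p n h & dominated p n s (afrak p n b t)].
Proof.
move=> hs; rewrite mem_iota /= => hu dom_su.
have [|k hk a_k] := afrak_window_onto p_prime b_coprime h (N.-1 - (u - s)).
  exact: leq_ltn_trans (leq_subr _ _) top_lt.
rewrite (dfl_sub_Dfl hu hs dom_su _ a_k); last by rewrite addrC addKr lez_nat ltz_nat hk.
apply: map_f; rewrite mem_filter a_k dominated_complement //.
by apply: map_f; rewrite mem_iota add0n leq0n hk.
Qed.

Lemma Dfl_term_mem s t : (s < N)%N -> t \in Sph p n h ->
  dominated p n s (afrak p n b t) ->
  Dfl p n b h s t \in [seq d u - d (u - s)%N | u <- Sp p n & dominated p n s u].
Proof.
move=> hs /mapP [k]; rewrite mem_iota add0n => hk ->.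
set a := afrak p n b (h + k%:Z) => /dominatedP dom_sa.
have [ha _] := afrak_spec p_prime b_coprime (h + k%:Z); rewrite -/a in ha.
set v := (N.-1 - a)%N.
have hv : (v < N)%N := leq_ltn_trans (leq_subr _ _) top_lt.
have no_carry j : (j < n)%N -> (digit p j v + digit p j s < p)%N.
  move=> hj; rewrite (digit_subn p_gt0 top_lt ha (dominated_pred_exp p_gt0 n a)) //.
  by rewrite digit_pred_exp //; have := dom_sa j hj; have := digit_lt p_gt0 j a; lia.
have hu : (v + s < N)%N := addn_digits_lt p_gt0 hv hs no_carry.
have dom_su : dominated p n s (v + s).
  by apply/dominatedP => j hj; rewrite (digit_addn p_gt0 hv hs no_carry) // leq_addl.
rewrite -(dfl_sub_Dfl hu hs dom_su); first last.
- by rewrite addnK subKn // -ltnS prednK.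
- by rewrite addrC addKr lez_nat ltz_nat hk.
by apply: map_f; rewrite mem_filter dom_su mem_iota add0n leq0n hu.
Qed.

End Correspondence.

Theorem corollary3p9 (p n : nat) (b : nat -> int) (h : int) :
  prime p -> (0 < n)%N ->
  (forall i : nat, (1 <= i <= n)%N -> coprimez (b i) p%:Z) ->
  forall s : nat, (s < p ^ n)%N ->
  wfun p n b h s =
  seqmin [seq Dfl p n b h s t | t <- Sph p n h & dominated p n s (afrak p n b t)].
Proof.
move=> p_prime _ b_coprime s hs.
have self_term : dfl p n b h s - dfl p n b h (s - s) \in
    [seq dfl p n b h u - dfl p n b h (u - s) | u <- Sp p n & dominated p n s u].
  by apply: map_f; rewrite mem_filter mem_iota add0n leq0n hs !andbT; apply/dominatedP.
rewrite /wfun; apply: seqmin_eq; first exact: self_term.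
- move=> z /mapP [u]; rewrite mem_filter => /andP [dom_su u_in] ->.
  exact: wfun_term_mem.
- move=> z /mapP [t]; rewrite mem_filter => /andP [dom_sa t_in] ->.
  exact: Dfl_term_mem.
Qed.
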